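(* For $\lambda\in[0,1]$ and $x,y\in\mathbb{R}^3$ define $$W_\lambda(x,y)=\lambda\left(\max\{|x|,|y|\}+\frac{(\min\{|x|,|y|\})^2}{|x-y|}\right)+(1-\lambda)\left(|x-y|+\frac23\,\frac{(\min\{|x|,|y|\})^2}{\max\{|x|,|y|\}}\right).$$ Then $$\sup_{\lambda\in[0,1]}\ \inf_{x,y\in\mathbb{R}^3,\ (x,y)\ne(0,0)}\frac{W_\lambda(x,y)}{|x|+|y|}>0.8218.$$
   Context: Conventions: a term $\frac{(\min\{|x|,|y|\})^2}{|x-y|}$ with $x=y\neq0$ is $+\infty$; terms with $\min\{|x|,|y|\}=0$ are $0$. *)

From HB Require Import structures.
From mathcomp Require Import all_boot all_order all_algebra.
From mathcomp Require Import all_classical all_reals.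
From mathcomp Require Import ereal.
Set Implicit Arguments. Unset Strict Implicit. Unset Printing Implicit Defensive.
Import Order.TTheory GRing.Theory Num.Theory.
Local Open Scope ring_scope.
Local Open Scope classical_set_scope.

Definition enorm (R : realType) (x : 'rV[R]_3) : R :=
  Num.sqrt (\sum_(i < 3) x ord0 i ^+ 2).

Section W.
Variable R : realType.
Implicit Types (x y : 'rV[R]_3) (l : R).

Definition nmax x y : R := Num.max (enorm x) (enorm y).
Definition nmin x y : R := Num.min (enorm x) (enorm y).

Definition term1 x y : \bar R :=
  if nmin x y == 0 then 0%E
  else if x == y then +oo%E
  else ((nmin x y) ^+ 2 / enorm (x - y))%:E.

Definition term2 x y : R :=
  if nmin x y == 0 then 0 else (nmin x y) ^+ 2 / nmax x y.

Definition W l x y : \bar R :=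
  (l%:E * ((nmax x y)%:E + term1 x y)
   + ((1 - l) * (enorm (x - y) + 2 / 3 * term2 x y))%:E)%E.

Definition ratio l x y : \bar R :=
  (W l x y * ((enorm x + enorm y)^-1)%:E)%E.

Definition inf_ratio l : \bar R :=
  ereal_inf [set r | exists x y, (x, y) != (0, 0) /\ r = ratio l x y].

Definition sup_inf_ratio : \bar R :=
  ereal_sup [set inf_ratio l | l in `[0, 1]%classic].
End W.

(** Put [m = min(|x|,|y|)], [M = max(|x|,|y|)], [d = |x - y|], take
    [lambda = 0.8435] and [k] just below [sqrt(lambda (1 - lambda))].
    Both [lambda m^2/d + (1-lambda) d - 2 k m] and
    [(lambda - c) M + (2k - c) m + (2/3)(1-lambda) m^2/M] have the shape
    [p u + q m + r m^2/u] with [p > 0] and [q^2 <= 4 p r], hence are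
    nonnegative; adding them gives [W >= c (|x| + |y|)] with
    [c = 0.82180001 > 0.8218].  The degenerate configurations ([m = 0], or
    [x = y]) give ratio [1] and [+oo]. *)
From mathcomp Require Import all_boot all_order all_algebra.
From mathcomp Require Import all_classical all_reals.
From mathcomp Require Import ereal.
From mathcomp Require Import ring lra.
Import Order.TTheory GRing.Theory Num.Theory.
Local Open Scope ring_scope.

Lemma quadratic_div_ge0 (F : realFieldType) (p q r u m : F) :
  0 < p -> q ^+ 2 <= 4 * p * r -> 0 < u ->
  0 <= p * u + q * m + r * (m ^+ 2 / u).
Proof.
move=> p_gt0 disc u_gt0.
set v := m ^+ 2 / u.
have vu : v * u = m ^+ 2 by rewrite /v mulfVK // gt_eqF.
have slack : 0 <= (4 * p * r - q ^+ 2) * m ^+ 2.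
  by apply: mulr_ge0; [rewrite subr_ge0 | exact: sqr_ge0].
have pu_gt0 : 0 < 4 * p * u by rewrite !mulr_gt0.
rewrite -(pmulr_rge0 _ pu_gt0).
have -> : 4 * p * u * (p * u + q * m + r * v)
          = (2 * p * u + q * m) ^+ 2 + (4 * p * r - q ^+ 2) * m ^+ 2.
  by ring: vu.
by rewrite addr_ge0 ?sqr_ge0.
Qed.

Section Constants.
Variable F : realFieldType.

Definition lam : F := 8435%:R / 10000%:R.
Definition cst : F := 82180001%:R / 100000000%:R.
Definition amgm_slope : F := 363328%:R / 1000000%:R.

Lemma W_lower_bound (M m d : F) : 0 < M -> 0 < d ->
  cst * (M + m) <= lam * (M + m ^+ 2 / d) + (1 - lam) * (d + 2 / 3 * (m ^+ 2 / M)).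
Proof.
move=> M_gt0 d_gt0.
have amgm := @quadratic_div_ge0 F (1 - lam) (- (2 * amgm_slope)) lam d m.
have rest := @quadratic_div_ge0 F (lam - cst) (2 * amgm_slope - cst)
                (2 / 3 * (1 - lam)) M m.
rewrite /lam /cst /amgm_slope in amgm rest *.
have := amgm ltac:(lra) ltac:(lra) d_gt0.
have := rest ltac:(lra) ltac:(lra) M_gt0.
lra.
Qed.

End Constants.
Arguments lam {F}.
Arguments cst {F}.

Section Enorm.
Context {R : realType}.
Implicit Types x y : 'rV[R]_3.

Lemma enorm_ge0 x : 0 <= enorm x.
Proof. exact: sqrtr_ge0. Qed.

Lemma enorm_eq0 x : (enorm x == 0) = (x == 0).
Proof.
apply/idP/eqP => [|->]; last first.
  by rewrite /enorm big1 ?sqrtr0 // => i _; rewrite mxE expr0n.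
rewrite /enorm sqrtr_eq0 => sum_le0.
have sum0 : \sum_(i < 3) x ord0 i ^+ 2 = 0.
  by apply/eqP; rewrite eq_le sum_le0 sumr_ge0 // => i _; exact: sqr_ge0.
move/psumr_eq0P: sum0 => coord_sq0.
apply/matrixP => i j; rewrite (ord1 i) mxE.
have /eqP := coord_sq0 (fun i _ => sqr_ge0 _) j isT.
by rewrite sqrf_eq0 => /eqP.
Qed.

Lemma enorm_gt0 x : (0 < enorm x) = (x != 0).
Proof. by rewrite lt_def enorm_eq0 enorm_ge0 andbT. Qed.

Lemma enormN x : enorm (- x) = enorm x.
Proof.
by rewrite /enorm; congr Num.sqrt; apply: eq_bigr => i _; rewrite mxE sqrrN.
Qed.

Lemma nmin_le_nmax x y : nmin x y <= nmax x y.
Proof. by rewrite /nmin /nmax ge_min !le_max lexx. Qed.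

Lemma nmax_add_nmin x y : nmax x y + nmin x y = enorm x + enorm y.
Proof. exact: addr_max_min. Qed.

Lemma enorm_add_gt0 x y : (x, y) != (0, 0) -> 0 < enorm x + enorm y.
Proof.
rewrite xpair_eqE negb_and => /orP[] nz.
  by rewrite ltr_pwDl ?enorm_ge0 ?enorm_gt0.
by rewrite ltr_wpDl ?enorm_ge0 ?enorm_gt0.
Qed.

Lemma enorm_sub_nmin0 x y : nmin x y = 0 -> enorm (x - y) = nmax x y.
Proof.
rewrite /nmin /nmax; case: leP => _ /eqP; rewrite enorm_eq0 => /eqP ->.
  by rewrite sub0r enormN.
by rewrite subr0.
Qed.

End Enorm.

Section W_cases.
Context {R : realType}.
Variables (l : R) (x y : 'rV[R]_3).

Lemma W_nmin0 : nmin x y = 0 -> W l x y = (nmax x y)%:E.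
Proof.
move=> m0; rewrite /W /term1 /term2 m0 eqxx enorm_sub_nmin0 //.
by rewrite mulr0 !addr0 -(EFinM l) -EFinD -mulrDl subrKC mul1r.
Qed.

Lemma W_diag : 0 < l -> nmin x y != 0 -> x = y -> W l x y = +oo%E.
Proof.
move=> l_gt0 m_nz xy; rewrite /W /term1 (negbTE m_nz) xy eqxx.
by rewrite addey // gt0_muley ?lte_fin // addye.
Qed.

Lemma W_generic : nmin x y != 0 -> x != y ->
  W l x y = (l * (nmax x y + nmin x y ^+ 2 / enorm (x - y))
             + (1 - l) * (enorm (x - y) + 2 / 3 * (nmin x y ^+ 2 / nmax x y)))%:E.
Proof.
by move=> m_nz xy; rewrite /W /term1 /term2 (negbTE m_nz) (negbTE xy) -EFinD.
Qed.

End W_cases.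

Lemma W_ge (R : realType) (x y : 'rV[R]_3) : (x, y) != (0, 0) ->
  ((cst * (enorm x + enorm y))%:E <= W lam x y)%E.
Proof.
move=> xy_nz; have s_gt0 := enorm_add_gt0 _ _ xy_nz.
rewrite -nmax_add_nmin.
have [m0|m_nz] := eqVneq (nmin x y) 0.
  rewrite W_nmin0 // lee_fin m0 addr0.
  rewrite -nmax_add_nmin m0 addr0 in s_gt0.
  by rewrite ler_piMl ?ltW // /cst; lra.
have m_gt0 : 0 < nmin x y by rewrite lt_def m_nz le_min !enorm_ge0.
have M_gt0 : 0 < nmax x y := lt_le_trans m_gt0 (nmin_le_nmax x y).
have [xy|xy_neq] := eqVneq x y.
  by rewrite W_diag ?leey // /lam; lra.
have d_gt0 : 0 < enorm (x - y) by rewrite enorm_gt0 subr_eq0.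
by rewrite W_generic // lee_fin W_lower_bound.
Qed.

Theorem lemma10 (R : realType) :
  ((8218%:R / 10000%:R : R)%:E < sup_inf_ratio R)%E.
Proof.
apply: (@lt_le_trans _ _ (cst : R)%:E); first by rewrite lte_fin /cst; lra.
apply: le_ereal_sup_tmp; exists (inf_ratio (lam : R)).
  by exists lam => //=; rewrite in_itv /= /lam; apply/andP; split; lra.
apply: le_ereal_inf_tmp => _ [x [y [xy_nz ->]]].
have s_gt0 := enorm_add_gt0 _ _ xy_nz.
rewrite /ratio -(mulfK (lt0r_neq0 s_gt0) cst) EFinM.
by apply: lee_wpmul2r; [rewrite lee_fin invr_ge0 ltW | exact: W_ge].
Qed.
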